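(* Let $\beta\in(1,2)$. There exists a positive constant $C$, independent of $h$ and $\psi$, such that for every grid function $\psi$ as in the context, $$C\Big(\frac{2}{\pi}\Big)^{\beta}\frac{2^{\frac{\beta-2}{2}}}{4\pi^2}\,\|\psi\|^2_{L^2_h}\le\big((-\Delta_h)^{\frac{\beta}{2}}\psi,\psi\big)_{h^2}\le 2^{\frac{\beta}{2}}\frac{\pi^{\beta}}{h^{\beta}}\,\|\psi\|^2_{L^2_h}.$$
   Context: Let $L>0$, $M\in\mathbb{Z}^+$, $h=2L/M$, $x_j=-L+jh$, $y_k=-L+kh$. Consider grid functions $\psi=\{\psi_{jk}\}_{j,k\in\mathbb{Z}}$ with $\psi_{jk}=0$ unless $1\le j,k\le M-1$ (i.e. vanishing on the boundary of $(-L,L)^2$ and outside it). The inner product and norm are $(w,v)_{h^2}=h^2\sum_{j=1}^{M-1}\sum_{k=1}^{M-1}w_{jk}v_{jk}$, $\|w\|^2_{L^2_h}=(w,w)_{h^2}$. The fractional centered difference operator is $$\big((-\Delta_h)^{\frac{\beta}{2}}\psi\big)_{jk}=\frac{1}{h^\beta}\sum_{l,m\in\mathbb{Z}}a^{(\beta)}_{l,m}\psi_{j+l,k+m},\qquad a^{(\beta)}_{l,m}=\frac{1}{4\pi^2}\int_{-\pi}^{\pi}\!\!\int_{-\pi}^{\pi}\Big[4\sin^2\tfrac{\eta_1}{2}+4\sin^2\tfrac{\eta_2}{2}\Big]^{\frac{\beta}{2}}e^{-\mathbf{i}(\eta_1 l+\eta_2 m)}\,d\eta_1 d\eta_2 .$$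 *)

From Stdlib Require Import Reals ZArith.
From Coquelicot Require Import Coquelicot.
Open Scope R_scope.

(* real power x^y, with the convention 0^y = 0 (y > 0) at x = 0 *)
Definition rpow (x y : R) : R := if Rle_dec x 0 then 0 else Rpower x y.

Definition symb (beta e1 e2 : R) : R :=
  rpow (4 * (sin (e1/2))^2 + 4 * (sin (e2/2))^2) (beta/2).

(* a^{(beta)}_{l,m} = 1/(4 pi^2) \int\int symb(e) e^{-i(e1 l + e2 m)} de.
   Since symb is even in each variable, the imaginary part (sine integral)
   vanishes, and the coefficient is the (real) cosine integral below. *)
Definition acoef (beta : R) (l m : Z) : R :=
  / (4 * PI ^ 2) *
  RInt (fun e1 => RInt (fun e2 =>
          symb beta e1 e2 * cos (e1 * IZR l + e2 * IZR m)) (- PI) PI)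
       (- PI) PI.

Definition supported (M : nat) (psi : Z -> Z -> R) : Prop :=
  forall j k : Z,
    ~ ((1 <= j <= Z.of_nat M - 1)%Z /\ (1 <= k <= Z.of_nat M - 1)%Z) ->
    psi j k = 0.

Definition gsum (M : nat) (F : Z -> Z -> R) : R :=
  sum_n_m (fun p : nat => sum_n_m (fun q : nat => F (Z.of_nat p) (Z.of_nat q))
                                  1 (M - 1)) 1 (M - 1).

Definition inner_h (h : R) (M : nat) (w v : Z -> Z -> R) : R :=
  h ^ 2 * gsum M (fun j k => w j k * v j k).

(* ((-Delta_h)^{beta/2} psi)_{jk} = h^{-beta} sum_{l,m in Z} a_{l,m} psi_{j+l,k+m};
   as psi is supported on 1..M-1, the sum over Z reduces to p = j+l, q = k+m
   ranging over 1..M-1. *)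
Definition frac_lap (beta h : R) (M : nat) (psi : Z -> Z -> R) : Z -> Z -> R :=
  fun j k => / Rpower h beta *
     gsum M (fun p q => acoef beta (p - j)%Z (q - k)%Z * psi p q).

(* By Parseval's identity the quadratic form equals [h^(2-beta) / (4 pi^2)] times the
   integral over [[-pi,pi]^2] of the symbol against [|psi^|^2], where [psi^(x,y)] is the
   trigonometric polynomial [sum psi_pq e^(i(px+qy))], whose squared modulus integrates to
   [4 pi^2 sum psi_pq^2].  The upper bound follows from [symb <= 8^(beta/2)].  For the lower
   bound, the symbol is at least [(r^2/4)^(beta/2)] off the box [(-r,r)^2], and a continuous
   cut-off supported in [(-2r,2r)^2] captures at most [((M-1) 8 r)^2 sum psi_pq^2] of the
   mass of [|psi^|^2], because [|psi^|^2 <= (M-1)^2 sum psi_pq^2] pointwise.  Taking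
   [r = 1/(8M)] and [h = 2L/M] leaves [(32 L)^(-beta) (1 - 1/(4 pi^2)) h^2 sum psi_pq^2],
   a lower bound whose constant does not depend on [h]. *)

From Stdlib Require Import Reals ZArith Lra Lia FunctionalExtensionality.
From Coquelicot Require Import Coquelicot.
Open Scope R_scope.

(** * Continuous functions of two variables and their integrals *)

Definition continuous2 (f : R -> R -> R) : Prop :=
  forall x y, continuity_2d_pt f x y.

Lemma continuous2_plus f g :
  continuous2 f -> continuous2 g -> continuous2 (fun x y => f x y + g x y).
Proof. intros Hf Hg x y; apply continuity_2d_pt_plus; auto. Qed.

Lemma continuous2_minus f g :
  continuous2 f -> continuous2 g -> continuous2 (fun x y => f x y - g x y).
Proof. intros Hf Hg x y; apply continuity_2d_pt_minus; auto. Qed.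

Lemma continuous2_mult f g :
  continuous2 f -> continuous2 g -> continuous2 (fun x y => f x y * g x y).
Proof. intros Hf Hg x y; apply continuity_2d_pt_mult; auto. Qed.

Lemma continuous2_const c : continuous2 (fun _ _ => c).
Proof. intros x y; apply continuity_2d_pt_const. Qed.

Lemma continuous2_scal c f : continuous2 f -> continuous2 (fun x y => c * f x y).
Proof. intros Hf; apply continuous2_mult; [apply continuous2_const | exact Hf]. Qed.

Lemma continuous2_comp (g : R -> R) f :
  (forall t, continuity_pt g t) -> continuous2 f -> continuous2 (fun x y => g (f x y)).
Proof. intros Hg Hf x y; apply continuity_1d_2d_pt_comp; auto. Qed.

Lemma continuous2_fst (g : R -> R) :
  (forall t, continuity_pt g t) -> continuous2 (fun x _ => g x).
Proof. intros Hg; apply (continuous2_comp g (fun x _ => x) Hg); exact continuity_2d_pt_id1. Qed.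

Lemma continuous2_snd (g : R -> R) :
  (forall t, continuity_pt g t) -> continuous2 (fun _ y => g y).
Proof. intros Hg; apply (continuous2_comp g (fun _ y => y) Hg); exact continuity_2d_pt_id2. Qed.

Lemma continuous2_section f x y : continuous2 f -> continuous (f x) y.
Proof.
  intros Hf; apply continuity_pt_filterlim; intros eps Heps.
  destruct (Hf x y (mkposreal eps Heps)) as [d Hd].
  exists d; split; [apply cond_pos |].
  intros v [_ Hv]; apply Hd; [rewrite Rminus_diag, Rabs_R0; apply cond_pos | exact Hv].
Qed.

Lemma ex_RInt_section f x c d : continuous2 f -> ex_RInt (f x) c d.
Proof.
  intros Hf; apply (@ex_RInt_continuous R_CompleteNormedModule).
  intros y _; now apply continuous2_section.
Qed.

Lemma continuity_pt_RInt_param f c d x0 :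
  c <= d -> continuous2 f -> continuity_pt (fun x => RInt (f x) c d) x0.
Proof.
  intros Hcd Hf eps Heps.
  assert (Heps' : 0 < eps / (d - c + 1)) by (apply Rdiv_lt_0_compat; lra).
  destruct (uniform_continuity_2d_1d' f c d x0 (fun t _ => Hf x0 t) (mkposreal _ Heps'))
    as [delta Hdelta].
  exists delta; split; [apply cond_pos |].
  intros x [_ Hx]; simpl in Hx |- *; unfold R_dist in Hx |- *.
  apply Rabs_lt_between' in Hx.
  rewrite <- (RInt_minus (f x) (f x0)) by now apply ex_RInt_section.
  eapply Rle_lt_trans.
  - apply (abs_RInt_le_const _ c d (eps / (d - c + 1))); [exact Hcd | |].
    + apply ex_RInt_minus; now apply ex_RInt_section.
    + intros t Ht; apply Rlt_le, (Hdelta t x0 t x); simpl; try lra.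
      rewrite Rminus_diag, Rabs_R0; apply cond_pos.
  - apply Rmult_lt_reg_r with (d - c + 1); [lra |].
    replace ((d - c) * (eps / (d - c + 1)) * (d - c + 1)) with ((d - c) * eps)
      by (field; lra).
    nra.
Qed.

Lemma nat_interval_ind (P : nat -> nat -> Prop) :
  (forall n m, (m < n)%nat -> P n m) ->
  (forall n, P n n) ->
  (forall n m, (n <= m)%nat -> P n m -> P n (S m)) ->
  forall n m, P n m.
Proof.
  intros Hempty Hone Hstep n m; induction m as [|m IH].
  - destruct n; [apply Hone | apply Hempty; lia].
  - destruct (Nat.lt_total n (S m)) as [Hlt | [-> | Hgt]].
    + apply Hstep; [lia | exact IH].
    + apply Hone.
    + apply Hempty; exact Hgt.
Qed.

Lemma continuous2_sum_n_m (F : nat -> R -> R -> R) n m :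
  (forall k, continuous2 (F k)) ->
  continuous2 (fun x y => sum_n_m (fun k => F k x y) n m).
Proof.
  intros HF; revert n m; apply nat_interval_ind.
  - intros n m Hmn.
    replace (fun x y => sum_n_m (fun k => F k x y) n m) with (fun _ _ : R => 0)
      by (do 2 (apply functional_extensionality; intro); now rewrite sum_n_m_zero).
    apply continuous2_const.
  - intros n.
    replace (fun x y => sum_n_m (fun k => F k x y) n n) with (F n)
      by (do 2 (apply functional_extensionality; intro); now rewrite sum_n_n).
    apply HF.
  - intros n m Hnm IH.
    replace (fun x y => sum_n_m (fun k => F k x y) n (S m))
      with (fun x y => sum_n_m (fun k => F k x y) n m + F (S m) x y)
      by (do 2 (apply functional_extensionality; intro); now rewrite sum_n_Sm by lia).
    now apply continuous2_plus.
Qed.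

Definition RInt2 (f : R -> R -> R) (a b c d : R) : R :=
  RInt (fun x => RInt (f x) c d) a b.

Section Rectangle.

Variables a b c d : R.
Hypothesis Hab : a <= b.
Hypothesis Hcd : c <= d.

Lemma ex_RInt_outer f : continuous2 f -> ex_RInt (fun x => RInt (f x) c d) a b.
Proof.
  intros Hf; apply (@ex_RInt_continuous R_CompleteNormedModule).
  intros x _; apply continuity_pt_filterlim, continuity_pt_RInt_param; assumption.
Qed.

Lemma RInt2_plus f g : continuous2 f -> continuous2 g ->
  RInt2 (fun x y => f x y + g x y) a b c d = RInt2 f a b c d + RInt2 g a b c d.
Proof.
  intros Hf Hg; unfold RInt2.
  rewrite <- (RInt_plus (fun x => RInt (f x) c d)) by now apply ex_RInt_outer.
  apply RInt_ext; intros x _.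
  now rewrite <- (RInt_plus (f x)) by now apply ex_RInt_section.
Qed.

Lemma RInt2_scal k f : continuous2 f ->
  RInt2 (fun x y => k * f x y) a b c d = k * RInt2 f a b c d.
Proof.
  intros Hf; unfold RInt2.
  rewrite <- (RInt_scal (fun x => RInt (f x) c d)) by now apply ex_RInt_outer.
  apply RInt_ext; intros x _.
  now rewrite <- (RInt_scal (f x)) by now apply ex_RInt_section.
Qed.

Lemma RInt2_minus f g : continuous2 f -> continuous2 g ->
  RInt2 (fun x y => f x y - g x y) a b c d = RInt2 f a b c d - RInt2 g a b c d.
Proof.
  intros Hf Hg.
  replace (fun x y => f x y - g x y) with (fun x y => f x y + (-1) * g x y)
    by (do 2 (apply functional_extensionality; intro); ring).
  rewrite RInt2_plus, RInt2_scal; [ring | assumption | assumption | now apply continuous2_scal].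
Qed.

Lemma RInt2_le f g : continuous2 f -> continuous2 g ->
  (forall x y, a <= x <= b -> c <= y <= d -> f x y <= g x y) ->
  RInt2 f a b c d <= RInt2 g a b c d.
Proof.
  intros Hf Hg Hfg; unfold RInt2.
  apply RInt_le; [exact Hab | now apply ex_RInt_outer | now apply ex_RInt_outer |].
  intros x Hx; apply RInt_le; [exact Hcd | now apply ex_RInt_section | now apply ex_RInt_section |].
  intros y Hy; apply Hfg; lra.
Qed.

Lemma RInt2_separable f g : ex_RInt f a b -> ex_RInt g c d ->
  RInt2 (fun x y => f x * g y) a b c d = RInt f a b * RInt g c d.
Proof.
  intros Hf Hg; unfold RInt2.
  rewrite (RInt_ext _ (fun x => RInt g c d * f x)).
  - rewrite (RInt_scal (V := R_CompleteNormedModule)) by exact Hf; apply Rmult_comm.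
  - intros x _; rewrite (RInt_scal (V := R_CompleteNormedModule) g) by exact Hg;
      apply Rmult_comm.
Qed.

Lemma RInt2_sum_n_m (F : nat -> R -> R -> R) n m :
  (forall k, continuous2 (F k)) ->
  RInt2 (fun x y => sum_n_m (fun k => F k x y) n m) a b c d
  = sum_n_m (fun k => RInt2 (F k) a b c d) n m.
Proof.
  intros HF; revert n m; apply nat_interval_ind.
  - intros n m Hmn.
    rewrite sum_n_m_zero by exact Hmn.
    replace (fun x y => sum_n_m (fun k => F k x y) n m) with (fun x y => 0 * F n x y)
      by (do 2 (apply functional_extensionality; intro); rewrite sum_n_m_zero by exact Hmn;
          apply Rmult_0_l).
    rewrite RInt2_scal by apply HF; apply Rmult_0_l.
  - intros n.
    rewrite sum_n_n; f_equal.
    do 2 (apply functional_extensionality; intro); now rewrite sum_n_n.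
  - intros n m Hnm IH.
    rewrite sum_n_Sm, <- IH, <- RInt2_plus by (lia || auto using continuous2_sum_n_m).
    f_equal; do 2 (apply functional_extensionality; intro); now rewrite sum_n_Sm by lia.
Qed.

End Rectangle.

Lemma gsum_ext_in M F G :
  (forall p q : nat, (1 <= p <= M - 1)%nat -> (1 <= q <= M - 1)%nat ->
     F (Z.of_nat p) (Z.of_nat q) = G (Z.of_nat p) (Z.of_nat q)) ->
  gsum M F = gsum M G.
Proof.
  intros H; apply sum_n_m_ext_loc; intros p Hp; apply sum_n_m_ext_loc; intros q Hq.
  now apply H.
Qed.

Lemma gsum_ext M F G : (forall p q, F p q = G p q) -> gsum M F = gsum M G.
Proof. intros H; apply gsum_ext_in; auto. Qed.

Lemma gsum_plus M F G : gsum M (fun p q => F p q + G p q) = gsum M F + gsum M G.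
Proof.
  unfold gsum; etransitivity; [apply sum_n_m_ext; intros p |];
    exact (sum_n_m_plus _ _ 1 (M - 1)).
Qed.

Lemma gsum_scal M k F : gsum M (fun p q => k * F p q) = k * gsum M F.
Proof.
  unfold gsum; etransitivity; [apply sum_n_m_ext; intros p |];
    exact (sum_n_m_mult_l (K := R_Ring) k _ 1 (M - 1)).
Qed.

Lemma gsum_le M F G : (forall p q, F p q <= G p q) -> gsum M F <= gsum M G.
Proof. intros H; apply sum_n_m_le; intros p; apply sum_n_m_le; intros q; apply H. Qed.

Lemma gsum_const M k : gsum M (fun _ _ => k) = INR (M - 1) ^ 2 * k.
Proof.
  unfold gsum; rewrite sum_n_m_ext with (b := fun _ => INR (M - 1) * k).
  - rewrite sum_n_m_const; replace (S (M - 1) - 1)%nat with (M - 1)%nat by lia.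
    simpl; ring.
  - intros p; rewrite sum_n_m_const; now replace (S (M - 1) - 1)%nat with (M - 1)%nat by lia.
Qed.

Lemma gsum_mul M F G :
  gsum M F * gsum M G = gsum M (fun j k => gsum M (fun p q => F p q * G j k)).
Proof.
  rewrite <- gsum_scal; apply gsum_ext; intros j k.
  rewrite Rmult_comm, <- gsum_scal; apply gsum_ext; intros p q; ring.
Qed.

Lemma continuous2_gsum M (F : Z -> Z -> R -> R -> R) :
  (forall p q, continuous2 (F p q)) -> continuous2 (fun x y => gsum M (fun p q => F p q x y)).
Proof.
  intros HF; unfold gsum.
  apply (continuous2_sum_n_m (fun p x y => sum_n_m (fun q => F _ _ x y) _ _)); intros p.
  apply (continuous2_sum_n_m (fun q x y => F _ _ x y)); intros q; apply HF.
Qed.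

Lemma RInt2_gsum M (F : Z -> Z -> R -> R -> R) a b c d :
  c <= d -> (forall p q, continuous2 (F p q)) ->
  RInt2 (fun x y => gsum M (fun p q => F p q x y)) a b c d
  = gsum M (fun p q => RInt2 (F p q) a b c d).
Proof.
  intros Hcd HF; unfold gsum.
  rewrite (RInt2_sum_n_m a b c d Hcd (fun p x y => sum_n_m (fun q => F _ _ x y) _ _)).
  - apply sum_n_m_ext; intros p.
    apply (RInt2_sum_n_m a b c d Hcd (fun q x y => F _ _ x y)); intros q; apply HF.
  - intros p; apply (continuous2_sum_n_m (fun q x y => F _ _ x y)); intros q; apply HF.
Qed.

Lemma sum_n_m_zero_in (u : nat -> R) n m :
  (forall k, (n <= k <= m)%nat -> u k = 0) -> sum_n_m u n m = 0.
Proof.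
  intros H; rewrite (sum_n_m_ext_loc u (fun _ => zero)) by exact H.
  exact (sum_n_m_const_zero (G := R_AbelianMonoid) n m).
Qed.

Lemma sum_n_m_kron (u : nat -> R) n m j : (n <= j <= m)%nat ->
  sum_n_m (fun k => if Nat.eq_dec k j then u k else 0) n m = u j.
Proof.
  intros Hj.
  assert (Hout : forall n' m', (j < n')%nat \/ (m' < j)%nat ->
            sum_n_m (fun k => if Nat.eq_dec k j then u k else 0) n' m' = 0).
  { intros n' m' Hnm; apply sum_n_m_zero_in; intros k Hk.
    destruct Nat.eq_dec; [lia | reflexivity]. }
  rewrite (sum_n_m_Chasles _ n j m), (Hout (S j) m) by lia.
  destruct (Nat.eq_dec n j) as [<- | Hnj].
  - rewrite sum_n_n; destruct Nat.eq_dec; [apply Rplus_0_r | lia].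
  - destruct j as [|j]; [lia |].
    rewrite sum_n_Sm, (Hout n j) by lia.
    destruct Nat.eq_dec; [| lia]; unfold plus; simpl; ring.
Qed.

(** * Toeplitz forms and Parseval's identity *)

Definition toeplitz_form (M : nat) (psi : Z -> Z -> R) (K : Z -> Z -> R) : R :=
  gsum M (fun j k => gsum M (fun p q => psi p q * psi j k * K (p - j)%Z (q - k)%Z)).

Definition sq_sum (M : nat) (psi : Z -> Z -> R) : R := gsum M (fun j k => psi j k * psi j k).

Lemma sq_sum_nonneg M psi : 0 <= sq_sum M psi.
Proof.
  apply Rle_trans with (gsum M (fun _ _ => 0)).
  - rewrite gsum_const; lra.
  - apply gsum_le; intros; apply Rle_0_sqr.
Qed.

Definition kron (l m : Z) : R :=
  if Z.eq_dec l 0 then if Z.eq_dec m 0 then 1 else 0 else 0.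

Lemma toeplitz_form_scal M psi k K :
  toeplitz_form M psi (fun l m => k * K l m) = k * toeplitz_form M psi K.
Proof.
  unfold toeplitz_form; rewrite <- gsum_scal; apply gsum_ext; intros j k'.
  rewrite <- gsum_scal; apply gsum_ext; intros p q; ring.
Qed.

Lemma continuous2_toeplitz_form M psi (K : Z -> Z -> R -> R -> R) :
  (forall l m, continuous2 (K l m)) ->
  continuous2 (fun x y => toeplitz_form M psi (fun l m => K l m x y)).
Proof.
  intros HK; unfold toeplitz_form.
  apply (continuous2_gsum M (fun j k x y => gsum M (fun p q => _ * K _ _ x y))); intros j k.
  apply (continuous2_gsum M (fun p q x y => _ * K _ _ x y)); intros p q.
  now apply continuous2_scal.
Qed.

Lemma RInt2_toeplitz_form M psi (K : Z -> Z -> R -> R -> R) a b c d :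
  c <= d -> (forall l m, continuous2 (K l m)) ->
  RInt2 (fun x y => toeplitz_form M psi (fun l m => K l m x y)) a b c d
  = toeplitz_form M psi (fun l m => RInt2 (K l m) a b c d).
Proof.
  intros Hcd HK; unfold toeplitz_form.
  rewrite (RInt2_gsum M (fun j k x y => gsum M (fun p q => _ * K _ _ x y))) by
    (auto; intros j k; apply (continuous2_gsum M (fun p q x y => _ * K _ _ x y));
     intros p q; now apply continuous2_scal).
  apply gsum_ext; intros j k.
  rewrite (RInt2_gsum M (fun p q x y => _ * K _ _ x y)) by
    (auto; intros p q; now apply continuous2_scal).
  apply gsum_ext; intros p q; now apply RInt2_scal.
Qed.

Lemma toeplitz_form_kron M psi : toeplitz_form M psi kron = sq_sum M psi.
Proof.
  unfold toeplitz_form, sq_sum; apply gsum_ext_in; intros j k Hj Hk.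
  unfold gsum.
  rewrite (sum_n_m_ext _ (fun p => if Nat.eq_dec p j then
      sum_n_m (fun q => if Nat.eq_dec q k then
        psi (Z.of_nat p) (Z.of_nat q) * psi (Z.of_nat j) (Z.of_nat k) else 0) 1 (M - 1)
      else 0)).
  - rewrite (sum_n_m_kron (fun p => sum_n_m _ 1 (M - 1))) by exact Hj.
    now rewrite (sum_n_m_kron (fun q => psi _ (Z.of_nat q) * _)) by exact Hk.
  - intros p; destruct Nat.eq_dec as [-> | Hpj].
    + apply sum_n_m_ext; intros q; unfold kron.
      rewrite Z.sub_diag; destruct Z.eq_dec; [| lia].
      destruct Nat.eq_dec, Z.eq_dec; try (exfalso; lia); [apply Rmult_1_r | apply Rmult_0_r].
    + apply sum_n_m_zero_in; intros q _; unfold kron.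
      destruct Z.eq_dec; [exfalso; lia | apply Rmult_0_r].
Qed.

Lemma toeplitz_form_le M psi K : (forall l m, Rabs (K l m) <= 1) ->
  toeplitz_form M psi K <= INR (M - 1) ^ 2 * sq_sum M psi.
Proof.
  intros HK.
  apply Rle_trans with (gsum M (fun j k =>
    gsum M (fun p q => / 2 * (psi p q * psi p q) + / 2 * (psi j k * psi j k)))).
  - apply gsum_le; intros j k; apply gsum_le; intros p q.
    specialize (HK (p - j)%Z (q - k)%Z); apply Rabs_le_between in HK.
    set (u := psi p q); set (v := psi j k).
    pose proof (pow2_ge_0 (u - v)); pose proof (pow2_ge_0 (u + v)).
    destruct (Rle_lt_dec 0 (u * v)); nra.
  - apply Req_le.
    rewrite (gsum_ext M _ (fun j k => / 2 * sq_sum M psi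
                                     + INR (M - 1) ^ 2 * (/ 2 * (psi j k * psi j k)))).
    + rewrite gsum_plus, gsum_const, !gsum_scal; unfold sq_sum; field.
    + intros j k; now rewrite gsum_plus, gsum_scal, gsum_const.
Qed.

Definition phase (l m : Z) (x y : R) : R := x * IZR l + y * IZR m.

Definition fourier_sq (M : nat) (psi : Z -> Z -> R) (x y : R) : R :=
  toeplitz_form M psi (fun l m => cos (phase l m x y)).

Lemma continuous2_cos_phase l m : continuous2 (fun x y => cos (phase l m x y)).
Proof.
  apply (continuous2_comp cos (phase l m)); [apply continuity_cos |].
  intros x y; unfold phase.
  apply continuity_2d_pt_plus; apply continuity_2d_pt_mult;
    auto using continuity_2d_pt_id1, continuity_2d_pt_id2, continuity_2d_pt_const.
Qed.

Lemma continuous2_fourier_sq M psi : continuous2 (fourier_sq M psi).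
Proof.
  apply (continuous2_toeplitz_form M psi (fun l m x y => cos (phase l m x y))).
  intros; apply continuous2_cos_phase.
Qed.

Lemma fourier_sq_eq M psi x y :
  fourier_sq M psi x y =
  gsum M (fun p q => psi p q * cos (phase p q x y)) ^ 2
  + gsum M (fun p q => psi p q * sin (phase p q x y)) ^ 2.
Proof.
  rewrite <- !Rsqr_pow2; unfold Rsqr; rewrite !gsum_mul, <- gsum_plus.
  apply gsum_ext; intros j k; rewrite <- gsum_plus; apply gsum_ext; intros p q.
  replace (phase (p - j) (q - k) x y) with (phase p q x y - phase j k x y)
    by (unfold phase; rewrite !minus_IZR; ring).
  rewrite cos_minus; ring.
Qed.

Lemma fourier_sq_nonneg M psi x y : 0 <= fourier_sq M psi x y.
Proof. rewrite fourier_sq_eq; apply Rplus_le_le_0_compat; apply pow2_ge_0. Qed.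

Lemma fourier_sq_le M psi x y : fourier_sq M psi x y <= INR (M - 1) ^ 2 * sq_sum M psi.
Proof. apply toeplitz_form_le; intros; apply Rabs_le, COS_bound. Qed.

Lemma RInt_cos_affine c (m : Z) :
  RInt (fun y => cos (c + y * IZR m)) (- PI) PI = if Z.eq_dec m 0 then 2 * PI * cos c else 0.
Proof.
  destruct (Z.eq_dec m 0) as [-> | Hm].
  - rewrite (RInt_ext _ (fun _ => cos c)) by (intros y _; now rewrite Rmult_0_r, Rplus_0_r).
    rewrite RInt_const; unfold scal; simpl; unfold mult; simpl; ring.
  - apply not_0_IZR in Hm.
    apply is_RInt_unique.
    replace 0 with (minus (sin (c + PI * IZR m) / IZR m) (sin (c + - PI * IZR m) / IZR m)).
    + apply (is_RInt_derive (fun y => sin (c + y * IZR m) / IZR m)).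
      * intros y _; auto_derive; [easy | field; exact Hm].
      * intros y _; apply (ex_derive_continuous (fun y => cos (c + y * IZR m))); auto_derive; easy.
    + assert (Hs : sin (IZR m * PI) = 0) by (apply sin_eq_0_1; now exists m).
      replace (c + PI * IZR m) with (c + IZR m * PI) by ring.
      replace (c + - PI * IZR m) with (c - IZR m * PI) by ring.
      rewrite sin_plus, sin_minus, Hs; unfold minus, plus, opp; simpl; field; exact Hm.
Qed.

Lemma RInt2_cos_phase l m :
  RInt2 (fun x y => cos (phase l m x y)) (- PI) PI (- PI) PI = 4 * PI ^ 2 * kron l m.
Proof.
  unfold RInt2, phase, kron.
  rewrite (RInt_ext _ (fun x => if Z.eq_dec m 0 then 2 * PI * cos (0 + x * IZR l) else 0))
    by (intros x _; rewrite RInt_cos_affine, Rplus_0_l; reflexivity).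
  destruct (Z.eq_dec m 0).
  - rewrite (RInt_scal (V := R_CompleteNormedModule) (fun x => cos (0 + x * IZR l))).
    + rewrite RInt_cos_affine; unfold scal; simpl; unfold mult; simpl.
      destruct (Z.eq_dec l 0); rewrite ?cos_0; ring.
    + apply (@ex_RInt_continuous R_CompleteNormedModule); intros x _.
      apply (ex_derive_continuous (fun y => cos (0 + y * IZR l))); auto_derive; easy.
  - rewrite RInt_const; unfold scal; simpl; unfold mult; simpl.
    destruct (Z.eq_dec l 0); ring.
Qed.

Lemma RInt2_fourier_sq M psi :
  RInt2 (fourier_sq M psi) (- PI) PI (- PI) PI = 4 * PI ^ 2 * sq_sum M psi.
Proof.
  pose proof PI_RGT_0.
  unfold fourier_sq.
  rewrite (RInt2_toeplitz_form M psi (fun l m x y => cos (phase l m x y)))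
    by (lra || intros; apply continuous2_cos_phase).
  replace (fun l m => RInt2 (fun x y => cos (phase l m x y)) (- PI) PI (- PI) PI)
    with (fun l m => 4 * PI ^ 2 * kron l m)
    by (do 2 (apply functional_extensionality; intro); symmetry; apply RInt2_cos_phase).
  now rewrite toeplitz_form_scal, toeplitz_form_kron.
Qed.

(** * The symbol and the cut-off *)

Lemma rpow_nonneg t c : 0 <= rpow t c.
Proof. unfold rpow; destruct Rle_dec; [lra | apply Rlt_le, exp_pos]. Qed.

Lemma rpow_Rpower t c : 0 < t -> rpow t c = Rpower t c.
Proof. intros Ht; unfold rpow; destruct Rle_dec; [lra | reflexivity]. Qed.

Lemma rpow_le_compat c s t : 0 <= c -> s <= t -> rpow s c <= rpow t c.
Proof.
  intros Hc Hst; unfold rpow at 1; destruct Rle_dec; [apply rpow_nonneg |].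
  rewrite rpow_Rpower by lra; apply Rle_Rpower_l; lra.
Qed.

Lemma rpow_continuous c z : 0 < c -> continuity_pt (fun t => rpow t c) z.
Proof.
  intros Hc; destruct (Rtotal_order z 0) as [Hz | [-> | Hz]].
  - apply (continuity_pt_locally_ext (fun _ => 0) _ (- z)); [lra | |].
    + intros t Ht; unfold Rdist in Ht; apply Rabs_lt_between' in Ht.
      unfold rpow; destruct Rle_dec; [reflexivity | lra].
    + apply continuity_pt_const; intros u v; reflexivity.
  - intros eps Heps; exists (Rpower eps (/ c)); split; [apply exp_pos |].
    intros t [_ Ht]; simpl in Ht |- *; unfold R_dist in Ht |- *.
    rewrite Rminus_0_r in Ht.
    replace (rpow 0 c) with 0 by (unfold rpow; destruct Rle_dec; lra).
    rewrite Rminus_0_r, Rabs_pos_eq by apply rpow_nonneg.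
    unfold rpow; destruct Rle_dec as [| Ht0]; [exact Heps |].
    rewrite Rabs_pos_eq in Ht by lra.
    replace eps with (Rpower (Rpower eps (/ c)) c)
      by (rewrite Rpower_mult, Rinv_l, Rpower_1; lra).
    apply Rlt_Rpower_l; lra.
  - apply (continuity_pt_locally_ext (fun t => Rpower t c) _ z); [exact Hz | |].
    + intros t Ht; unfold Rdist in Ht; apply Rabs_lt_between' in Ht.
      symmetry; apply rpow_Rpower; lra.
    + apply derivable_continuous_pt.
      exists (c * Rpower z (c - 1)); now apply derivable_pt_lim_power.
Qed.

Lemma Rpower_pow2 x c : 0 < x -> Rpower (x ^ 2) (c / 2) = Rpower x c.
Proof.
  intros Hx; rewrite <- (Rpower_pow 2 x Hx), Rpower_mult; f_equal; simpl; field.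
Qed.

Lemma continuous2_symb beta : 0 < beta -> continuous2 (symb beta).
Proof.
  intros Hb; unfold symb.
  assert (Hsin : forall t, continuity_pt (fun t => 4 * sin (t / 2) ^ 2) t).
  { intros t; apply continuity_pt_filterlim.
    apply (ex_derive_continuous (fun t => 4 * sin (t / 2) ^ 2)); auto_derive; easy. }
  apply (continuous2_comp (fun t => rpow t (beta / 2))).
  - intros t; apply rpow_continuous; lra.
  - apply continuous2_plus; [apply (continuous2_fst _ Hsin) | apply (continuous2_snd _ Hsin)].
Qed.

Lemma symb_le beta x y : 0 <= beta -> symb beta x y <= Rpower 8 (beta / 2).
Proof.
  intros Hb; rewrite <- (rpow_Rpower 8) by lra.
  apply rpow_le_compat; [lra |].
  pose proof (SIN_bound (x / 2)); pose proof (SIN_bound (y / 2)); nra.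
Qed.

Lemma four_sin_sq_half_ge r x : 0 < r <= 1 -> r <= Rabs x <= PI ->
  r ^ 2 / 4 <= 4 * sin (x / 2) ^ 2.
Proof.
  intros Hr Hx; pose proof PI2_3_2.
  replace (sin (x / 2) ^ 2) with (sin (Rabs x / 2) ^ 2).
  2: { unfold Rabs; destruct Rcase_abs; [| reflexivity].
       replace (- x / 2) with (- (x / 2)) by field; rewrite sin_neg; ring. }
  assert (Hmono : sin (r / 2) <= sin (Rabs x / 2)) by (apply sin_incr_1; lra).
  (* sin t >= t - t^3/6 >= t/2 for 0 <= t <= 1/2 *)
  pose proof (sin_bound (r / 2) 0) as Hsin; simpl in Hsin.
  unfold sin_approx, sin_term in Hsin; simpl in Hsin.
  destruct Hsin as [Hsin _]; [lra | lra |].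
  assert (r / 4 <= sin (Rabs x / 2)) by nra.
  nra.
Qed.

Lemma symb_ge beta r x y : 0 <= beta -> 0 < r <= 1 -> Rabs x <= PI -> Rabs y <= PI ->
  r <= Rabs x \/ r <= Rabs y -> Rpower (r ^ 2 / 4) (beta / 2) <= symb beta x y.
Proof.
  intros Hb Hr Hx Hy Hxy; unfold symb.
  rewrite <- rpow_Rpower by nra.
  apply rpow_le_compat; [lra |].
  pose proof (pow2_ge_0 (sin (x / 2))); pose proof (pow2_ge_0 (sin (y / 2))).
  destruct Hxy; [pose proof (four_sin_sq_half_ge r x) | pose proof (four_sin_sq_half_ge r y)];
    lra.
Qed.

Definition tent (r x : R) : R := Rmax 0 (2 - Rabs x / r).

Lemma tent_continuous r x : continuity_pt (tent r) x.
Proof.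
  apply continuity_pt_filterlim.
  set (s := fun t => 2 + - (Rabs t * / r)).
  assert (Hs : continuous s x).
  { apply (continuous_plus (fun _ => 2) (fun t => - (Rabs t * / r))); [apply continuous_const |].
    apply (continuous_opp (fun t => Rabs t * / r)).
    apply (continuous_mult (fun t => Rabs t) (fun _ => / r));
      [apply (continuous_Rabs_comp (fun t => t)), continuous_id | apply continuous_const]. }
  apply (continuous_ext (fun t => (s t + Rabs (s t)) * / 2)).
  - intros t; unfold tent; change (2 - Rabs t / r) with (s t).
    unfold Rmax; destruct Rle_dec; [rewrite (Rabs_pos_eq (s t)) | rewrite (Rabs_left (s t))]; lra.
  - apply (continuous_mult (fun t => s t + Rabs (s t)) (fun _ => / 2)); [| apply continuous_const].
    apply (continuous_plus s (fun t => Rabs (s t))); [exact Hs | apply continuous_Rabs_comp, Hs].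
Qed.

Lemma tent_ge_0 r x : 0 <= tent r x.
Proof. apply Rmax_l. Qed.

Lemma ex_RInt_tent r a b : ex_RInt (tent r) a b.
Proof.
  apply (@ex_RInt_continuous R_CompleteNormedModule); intros x _.
  apply continuity_pt_filterlim, tent_continuous.
Qed.

Section Tent.

Variable r : R.
Hypothesis Hr : 0 < r.

Lemma tent_le_2 x : tent r x <= 2.
Proof.
  apply Rmax_lub; [lra |].
  assert (0 <= Rabs x / r) by (apply Rdiv_le_0_compat; [apply Rabs_pos | exact Hr]); lra.
Qed.

Lemma tent_ge_1 x : Rabs x < r -> 1 <= tent r x.
Proof.
  intros Hx; eapply Rle_trans; [| apply Rmax_r].
  apply (Rdiv_lt_1 (Rabs x)) in Hx; lra.
Qed.

Lemma tent_out x : 2 * r <= Rabs x -> tent r x = 0.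
Proof.
  intros Hx; apply Rmax_left.
  apply (Rle_div_r 2 (Rabs x) r) in Hx; lra.
Qed.

Lemma RInt_tent_bound : 2 * r <= PI -> 0 <= RInt (tent r) (- PI) PI <= 8 * r.
Proof.
  intros HrPI; split.
  - apply RInt_ge_0; [lra | apply ex_RInt_tent | intros; apply tent_ge_0].
  - rewrite <- (RInt_Chasles (V := R_CompleteNormedModule) (tent r) (- PI) (- (2 * r)) PI)
      by apply ex_RInt_tent.
    rewrite <- (RInt_Chasles (V := R_CompleteNormedModule) (tent r) (- (2 * r)) (2 * r) PI)
      by apply ex_RInt_tent.
    rewrite (RInt_ext (tent r) (fun _ => 0) (- PI) (- (2 * r))).
    2: { intros x Hx; rewrite Rmin_left, Rmax_right in Hx by lra.
         apply tent_out; rewrite Rabs_left; lra. }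
    rewrite (RInt_ext (tent r) (fun _ => 0) (2 * r) PI).
    2: { intros x Hx; rewrite Rmin_left, Rmax_right in Hx by lra.
         apply tent_out; rewrite Rabs_pos_eq; lra. }
    assert (RInt (tent r) (- (2 * r)) (2 * r) <= RInt (fun _ => 2) (- (2 * r)) (2 * r)).
    { apply RInt_le; [lra | apply ex_RInt_tent | apply ex_RInt_const | intros; apply tent_le_2]. }
    rewrite !RInt_const in *; unfold plus, scal in *; simpl in *; unfold mult in *; simpl in *.
    lra.
Qed.

End Tent.

Lemma symb_ge_cutoff beta r x y : 0 <= beta -> 0 < r <= 1 -> Rabs x <= PI -> Rabs y <= PI ->
  Rpower (r ^ 2 / 4) (beta / 2) * (1 - tent r x * tent r y) <= symb beta x y.
Proof.
  intros Hb Hr Hx Hy.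
  pose proof (tent_ge_0 r x); pose proof (tent_ge_0 r y).
  assert (0 <= tent r x * tent r y) by nra.
  assert (Hp : 0 < Rpower (r ^ 2 / 4) (beta / 2)) by apply exp_pos.
  assert (Hbox : (Rabs x < r /\ Rabs y < r) \/ (r <= Rabs x \/ r <= Rabs y))
    by (destruct (Rlt_le_dec (Rabs x) r), (Rlt_le_dec (Rabs y) r); tauto).
  destruct Hbox as [[Hxr Hyr] | Hout].
  - apply tent_ge_1 in Hxr, Hyr; try lra.
    assert (1 <= tent r x * tent r y) by nra.
    apply Rle_trans with 0; [nra | apply rpow_nonneg].
  - apply Rle_trans with (Rpower (r ^ 2 / 4) (beta / 2)); [nra | now apply symb_ge].
Qed.

(** * The quadratic form *)

Definition symbol_energy (beta : R) (M : nat) (psi : Z -> Z -> R) : R :=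
  RInt2 (fun x y => symb beta x y * fourier_sq M psi x y) (- PI) PI (- PI) PI.

Lemma inner_frac_lap beta h M psi :
  inner_h h M (frac_lap beta h M psi) psi
  = h ^ 2 / Rpower h beta * toeplitz_form M psi (acoef beta).
Proof.
  unfold inner_h, frac_lap, toeplitz_form, Rdiv.
  rewrite Rmult_assoc; f_equal.
  rewrite <- gsum_scal; apply gsum_ext; intros j k.
  rewrite Rmult_assoc; f_equal.
  rewrite Rmult_comm, <- gsum_scal; apply gsum_ext; intros p q; ring.
Qed.

Lemma toeplitz_form_acoef beta M psi : 0 < beta ->
  toeplitz_form M psi (acoef beta) = / (4 * PI ^ 2) * symbol_energy beta M psi.
Proof.
  intros Hb; pose proof PI_RGT_0.
  unfold acoef; rewrite toeplitz_form_scal; f_equal.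
  unfold symbol_energy, fourier_sq.
  replace (fun x y => symb beta x y * toeplitz_form M psi (fun l m => cos (phase l m x y)))
    with (fun x y => toeplitz_form M psi (fun l m => symb beta x y * cos (phase l m x y)))
    by (do 2 (apply functional_extensionality; intro); apply toeplitz_form_scal).
  rewrite (RInt2_toeplitz_form M psi (fun l m x y => symb beta x y * cos (phase l m x y)));
    [reflexivity | lra |].
  intros l m; apply continuous2_mult; [now apply continuous2_symb | apply continuous2_cos_phase].
Qed.

Lemma symbol_energy_le beta M psi : 0 < beta ->
  symbol_energy beta M psi <= Rpower 8 (beta / 2) * (4 * PI ^ 2 * sq_sum M psi).
Proof.
  intros Hb; pose proof PI_RGT_0.
  rewrite <- RInt2_fourier_sq, <- RInt2_scal by (apply continuous2_fourier_sq || lra).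
  unfold symbol_energy; apply RInt2_le; [lra | lra | | |].
  - apply continuous2_mult; [now apply continuous2_symb | apply continuous2_fourier_sq].
  - apply continuous2_scal, continuous2_fourier_sq.
  - intros x y _ _; apply Rmult_le_compat_r; [apply fourier_sq_nonneg | apply symb_le; lra].
Qed.

Lemma continuous2_cutoff r : continuous2 (fun x y => tent r x * tent r y).
Proof.
  apply continuous2_mult; [apply continuous2_fst | apply continuous2_snd]; apply tent_continuous.
Qed.

Lemma symbol_energy_ge_cutoff beta M psi r : 0 < beta -> 0 < r <= 1 ->
  Rpower (r ^ 2 / 4) (beta / 2)
  * (4 * PI ^ 2 * sq_sum M psi
     - RInt2 (fun x y => tent r x * tent r y * fourier_sq M psi x y) (- PI) PI (- PI) PI)
  <= symbol_energy beta M psi.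
Proof.
  intros Hb Hr; pose proof PI_RGT_0; pose proof PI2_3_2.
  pose proof (continuous2_cutoff r) as HU; pose proof (continuous2_fourier_sq M psi) as HG.
  rewrite <- RInt2_fourier_sq, <- RInt2_minus, <- RInt2_scal
    by (auto using continuous2_mult, continuous2_minus || lra).
  unfold symbol_energy; apply RInt2_le; [lra | lra | | |].
  - auto using continuous2_scal, continuous2_mult, continuous2_minus.
  - apply continuous2_mult; [now apply continuous2_symb | exact HG].
  - intros x y Hx Hy.
    replace (fourier_sq M psi x y - tent r x * tent r y * fourier_sq M psi x y)
      with ((1 - tent r x * tent r y) * fourier_sq M psi x y) by ring.
    rewrite <- Rmult_assoc; apply Rmult_le_compat_r; [apply fourier_sq_nonneg |].
    apply symb_ge_cutoff; try lra; apply Rabs_le; lra.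
Qed.

Lemma RInt2_cutoff_fourier_sq_le M psi r :
  RInt2 (fun x y => tent r x * tent r y * fourier_sq M psi x y) (- PI) PI (- PI) PI
  <= (INR (M - 1) * RInt (tent r) (- PI) PI) ^ 2 * sq_sum M psi.
Proof.
  pose proof PI_RGT_0.
  apply Rle_trans with
    (RInt2 (fun x y => INR (M - 1) ^ 2 * sq_sum M psi * (tent r x * tent r y)) (- PI) PI (- PI) PI).
  - apply RInt2_le; [lra | lra
                    | auto using continuous2_mult, continuous2_cutoff, continuous2_fourier_sq
                    | auto using continuous2_scal, continuous2_cutoff |].
    intros x y _ _; rewrite Rmult_comm; apply Rmult_le_compat_r; [| apply fourier_sq_le].
    apply Rmult_le_pos; apply tent_ge_0.
  - rewrite RInt2_scal, RInt2_separable by (apply continuous2_cutoff || apply ex_RInt_tent || lra).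
    apply Req_le; ring.
Qed.

Lemma symbol_energy_ge beta M psi : 0 < beta -> (1 <= M)%nat ->
  Rpower (/ (16 * INR M)) beta * (4 * PI ^ 2 - 1) * sq_sum M psi <= symbol_energy beta M psi.
Proof.
  intros Hb HM; pose proof PI_RGT_0; pose proof PI2_3_2.
  apply le_INR in HM; simpl in HM.
  set (r := / (8 * INR M)).
  assert (Hr : 0 < r <= 1).
  { unfold r; split; [apply Rinv_0_lt_compat; lra |].
    rewrite <- Rinv_1; apply Rinv_le_contravar; lra. }
  assert (Hmass : 0 <= INR (M - 1) * RInt (tent r) (- PI) PI <= 1).
  { assert (HN : 0 <= INR (M - 1) <= INR M) by (split; [apply pos_INR | apply le_INR; lia]).
    destruct (RInt_tent_bound r (proj1 Hr)) as [HT0 HT8]; [lra |].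
    split; [nra |].
    apply Rle_trans with (INR M * (8 * r)); [nra | unfold r; field_simplify; lra]. }
  replace (Rpower (/ (16 * INR M)) beta) with (Rpower (r ^ 2 / 4) (beta / 2)).
  2: { rewrite <- (Rpower_pow2 (/ (16 * INR M))) by (apply Rinv_0_lt_compat; lra).
       f_equal; unfold r; field; lra. }
  eapply Rle_trans; [| exact (symbol_energy_ge_cutoff beta M psi r Hb Hr)].
  pose proof (RInt2_cutoff_fourier_sq_le M psi r).
  pose proof (sq_sum_nonneg M psi).
  assert ((INR (M - 1) * RInt (tent r) (- PI) PI) ^ 2 * sq_sum M psi <= sq_sum M psi).
  { rewrite <- (Rmult_1_l (sq_sum M psi)) at 2; apply Rmult_le_compat_r; [assumption |].
    rewrite <- (pow1 2); apply pow_incr; exact Hmass. }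
  rewrite Rmult_assoc; apply Rmult_le_compat_l; [apply Rlt_le, exp_pos | lra].
Qed.

Lemma Rpower_8_le beta : 0 <= beta -> Rpower 8 (beta / 2) <= Rpower 2 (beta / 2) * Rpower PI beta.
Proof.
  intros Hb; pose proof PI2_3_2.
  rewrite <- (Rpower_pow2 PI), Rpower_mult_distr by (lra || nra).
  apply Rle_Rpower_l; [lra | nra].
Qed.

Lemma Rpower_grid beta L M : 0 < L -> 0 < INR M ->
  Rpower (/ (16 * INR M)) beta = Rpower (/ (32 * L)) beta * Rpower (2 * L / INR M) beta.
Proof.
  intros HL HM; rewrite Rpower_mult_distr.
  - f_equal; field; lra.
  - apply Rinv_0_lt_compat; lra.
  - apply Rdiv_lt_0_compat; lra.
Qed.

Lemma quad_form_eq beta h M psi : 0 < beta ->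
  inner_h h M (frac_lap beta h M psi) psi
  = h ^ 2 / Rpower h beta / (4 * PI ^ 2) * symbol_energy beta M psi.
Proof.
  intros Hb; pose proof PI_RGT_0.
  rewrite inner_frac_lap, toeplitz_form_acoef by exact Hb.
  field; split; [apply Rgt_not_eq, exp_pos | nra].
Qed.

Lemma quad_form_le beta h M psi : 0 < beta ->
  inner_h h M (frac_lap beta h M psi) psi
  <= Rpower 2 (beta / 2) * Rpower PI beta / Rpower h beta * inner_h h M psi psi.
Proof.
  intros Hb; pose proof PI_RGT_0.
  assert (HP : 0 < Rpower h beta) by apply exp_pos.
  rewrite quad_form_eq by exact Hb.
  change (inner_h h M psi psi) with (h ^ 2 * sq_sum M psi).
  apply Rle_trans with (Rpower 8 (beta / 2) / Rpower h beta * (h ^ 2 * sq_sum M psi)).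
  - replace (Rpower 8 (beta / 2) / Rpower h beta * (h ^ 2 * sq_sum M psi))
      with (h ^ 2 / Rpower h beta / (4 * PI ^ 2)
            * (Rpower 8 (beta / 2) * (4 * PI ^ 2 * sq_sum M psi)))
      by (field; nra).
    apply Rmult_le_compat_l; [| now apply symbol_energy_le].
    apply Rmult_le_pos;
      [apply Rdiv_le_0_compat; [nra | exact HP] | apply Rlt_le, Rinv_0_lt_compat; nra].
  - apply Rmult_le_compat_r; [pose proof (sq_sum_nonneg M psi); nra |].
    apply Rmult_le_compat_r; [apply Rlt_le, Rinv_0_lt_compat, HP | apply Rpower_8_le; lra].
Qed.

Lemma quad_form_ge beta L M psi : 0 < beta -> 0 < L -> (1 <= M)%nat ->
  let h := 2 * L / INR M in
  Rpower (/ (32 * L)) beta * (1 - / (4 * PI ^ 2)) * inner_h h M psi psi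
  <= inner_h h M (frac_lap beta h M psi) psi.
Proof.
  intros Hb HL HM h; pose proof PI_RGT_0.
  assert (HMr : 1 <= INR M) by (apply (le_INR 1) in HM; exact HM).
  assert (HP : 0 < Rpower h beta) by apply exp_pos.
  rewrite quad_form_eq by exact Hb.
  change (inner_h h M psi psi) with (h ^ 2 * sq_sum M psi).
  replace (Rpower (/ (32 * L)) beta * (1 - / (4 * PI ^ 2)) * (h ^ 2 * sq_sum M psi))
    with (h ^ 2 / Rpower h beta / (4 * PI ^ 2)
          * (Rpower (/ (16 * INR M)) beta * (4 * PI ^ 2 - 1) * sq_sum M psi))
    by (rewrite (Rpower_grid beta L M) by lra; fold h; field; split; [lra | nra]).
  apply Rmult_le_compat_l; [| now apply symbol_energy_ge].
  apply Rmult_le_pos;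
    [apply Rdiv_le_0_compat; [nra | exact HP] | apply Rlt_le, Rinv_0_lt_compat; nra].
Qed.

Theorem lemma2p10 (beta : R) (Hb : 1 < beta < 2) (L : R) (HL : 0 < L) :
  exists C : R, 0 < C /\
    forall (M : nat) (psi : Z -> Z -> R),
      (1 <= M)%nat -> supported M psi ->
      let h := 2 * L / INR M in
      C * Rpower (2 / PI) beta * Rpower 2 ((beta - 2) / 2) / (4 * PI ^ 2)
        * inner_h h M psi psi
      <= inner_h h M (frac_lap beta h M psi) psi
      /\ inner_h h M (frac_lap beta h M psi) psi
         <= Rpower 2 (beta / 2) * Rpower PI beta / Rpower h beta
            * inner_h h M psi psi.
Proof.
  pose proof PI_RGT_0; pose proof PI2_3_2.
  set (K := Rpower (2 / PI) beta * Rpower 2 ((beta - 2) / 2) / (4 * PI ^ 2)).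
  set (rho := Rpower (/ (32 * L)) beta * (1 - / (4 * PI ^ 2))).
  assert (HK : 0 < K).
  { apply Rdiv_lt_0_compat; [apply Rmult_lt_0_compat; apply exp_pos | nra]. }
  assert (Hrho : 0 < rho).
  { apply Rmult_lt_0_compat; [apply exp_pos |].
    assert (/ (4 * PI ^ 2) < 1) by (rewrite <- Rinv_1; apply Rinv_lt_contravar; nra); lra. }
  exists (rho / K); split; [now apply Rdiv_lt_0_compat |].
  (* frac_lap only sums over interior nodes *)
  intros M psi HM _ h; split.
  - replace (rho / K * Rpower (2 / PI) beta * Rpower 2 ((beta - 2) / 2) / (4 * PI ^ 2))
      with rho by (unfold K; field; repeat split; try apply Rgt_not_eq, exp_pos; nra).
    apply quad_form_ge; lra || exact HM.
  - apply quad_form_le; lra.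
Qed.
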